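(* Let $Q>0$, $\alpha>0$, $\beta\ge1$, and let the inverse demand function be $p(q)=\alpha(Q-q)^{\beta}$ for $0\le q\le Q$ and $p(q)=0$ for $q>Q$. Suppose the cost functions satisfy Assumptions 1, 3 and 4, and that there is a best supplier $k$ whose cost function is linear, $C_k(x)=cx$ with $0<c<\alpha Q^\beta$, and satisfies $C_k'(x)\le C_m'(x)$ for every supplier $m$ and every $x>0$. Then every Cournot equilibrium $\mathbf{x}$ satisfies $$\gamma(\mathbf{x})\ge f\!\left(\Big(\frac{p(0)}{c}\Big)^{(\beta-1)/\beta}\right)\quad\text{and}\quad \gamma(\mathbf{x})\ge f\!\left(\Big(\frac{p(X)}{c}\Big)^{(\beta-1)/\beta}\right),$$ where $X=\sum_n x_n$.
   Context: Cournot model: $N$ suppliers, inverse demand $p$, supplier $n$ has cost $C_n:[0,\infty)\to[0,\infty)$ and chooses $x_n\ge0$; $X=\sum_n x_n$; payoff of $n$ is $x_np(X)-C_n(x_n)$. A Cournot equilibrium is a profile $\mathbf{x}\ge0$ such that no supplier can increase its payoff by unilaterally changing its quantity to any $x\ge0$. $C_n'(0)$ is the right derivative at $0$. Assumption 1: each $C_n$ is convex, continuous, nondecreasing on $[0,\infty)$, continuously differentiable on $(0,\infty)$, with $C_n(0)=0$. Assumption 3: there exists $R>0$ such that $p(R)\le\min_n C_n'(0)$. Assumption 4: $p(0)>\min_n C_n'(0)$. Social welfare of $\mathbf{x}\ge0$: $W(\mathbf{x})=\int_0^X p(q)\,dq-\sum_{n=1}^N C_n(x_n)$; a social optimum $\mathbf{x}^S$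 maximizes $W$. Efficiency: $\gamma(\mathbf{x})=W(\mathbf{x})/W(\mathbf{x}^S)$. For $\overline c\ge1$: $f(\overline c)=\dfrac{\phi^2+2}{\phi^2+2\phi+\overline c}$ with $\phi=\max\left\{\dfrac{2-\overline c+\sqrt{\overline c^{\,2}-4\overline c+12}}{2},1\right\}$. *)

From Stdlib Require Import Reals Lra List ClassicalEpsilon.
Open Scope R_scope.

(* Inverse demand p(q) = alpha (Q-q)^beta on [0,Q], 0 for q > Q.
   (For q < 0 it is the same formula; only q >= 0 is ever used.) *)
Definition pdem (alpha Q beta : R) (q : R) : R :=
  if Rlt_dec q Q then alpha * Rpower (Q - q) beta else 0.

Definition total (N : nat) (x : nat -> R) : R :=
  fold_right Rplus 0 (map x (seq 0 N)).

Definition upd (x : nat -> R) (n : nat) (y : R) : nat -> R :=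
  fun m => if Nat.eqb m n then y else x m.

Definition nonneg_profile (N : nat) (x : nat -> R) : Prop :=
  forall n, (n < N)%nat -> 0 <= x n.

Definition payoff (p : R -> R) (C : nat -> R -> R) (N : nat) (x : nat -> R) (n : nat) : R :=
  x n * p (total N x) - C n (x n).

Definition cournot_eq (p : R -> R) (C : nat -> R -> R) (N : nat) (x : nat -> R) : Prop :=
  nonneg_profile N x /\
  forall n, (n < N)%nat -> forall y, 0 <= y ->
    payoff p C N (upd x n y) n <= payoff p C N x n.

(* Riemann integral of f on [a,b] (value of RiemannInt; independent of the proof) *)
Definition integral (f : R -> R) (a b : R) : R :=
  epsilon (inhabits 0) (fun I => exists pr : Riemann_integrable f a b, RiemannInt pr = I).

Definition welfare (p : R -> R) (C : nat -> R -> R) (N : nat) (x : nat -> R) : R :=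
  integral p 0 (total N x) - fold_right Rplus 0 (map (fun n => C n (x n)) (seq 0 N)).

Definition social_optimum (p : R -> R) (C : nat -> R -> R) (N : nat) (xS : nat -> R) : Prop :=
  nonneg_profile N xS /\
  forall y, nonneg_profile N y -> welfare p C N y <= welfare p C N xS.

Definition right_deriv (f : R -> R) (x d : R) : Prop :=
  forall eps, 0 < eps -> exists delta, 0 < delta /\
    forall h, 0 < h < delta -> Rabs ((f (x + h) - f x) / h - d) < eps.

(* Assumption 1 for a cost function Cn, with dCn its derivative on (0,oo)
   and dCn 0 its right derivative at 0. *)
Definition assumption1 (Cn dCn : R -> R) : Prop :=
  (forall x y t, 0 <= x -> 0 <= y -> 0 <= t <= 1 ->
     Cn (t * x + (1 - t) * y) <= t * Cn x + (1 - t) * Cn y) /\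
  (forall x, 0 <= x -> forall eps, 0 < eps -> exists delta, 0 < delta /\
     forall y, 0 <= y -> Rabs (y - x) < delta -> Rabs (Cn y - Cn x) < eps) /\
  (forall x y, 0 <= x <= y -> Cn x <= Cn y) /\
  (forall x, 0 < x -> derivable_pt_lim Cn x (dCn x)) /\
  (forall x, 0 < x -> continuity_pt dCn x) /\
  right_deriv Cn 0 (dCn 0) /\
  Cn 0 = 0.

Definition phi_of (cb : R) : R :=
  Rmax ((2 - cb + sqrt (cb ^ 2 - 4 * cb + 12)) / 2) 1.

Definition fbound (cb : R) : R :=
  let ph := phi_of cb in (ph ^ 2 + 2) / (ph ^ 2 + 2 * ph + cb).

(* Write X for the equilibrium total, a = -p'(X) = alpha beta (Q-X)^(beta-1) and
   D = p(X) - c.  The proof compares both welfares with a quadratic model: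
   - convexity of p gives p(q) >= p(X) + a (X - q); hence the equilibrium conditions
     force every cost C_n(x_n) <= x_n (p(X) - a x_n), the linear supplier to satisfy
     D <= a x_k, and D > 0, while the consumer surplus is at least X p(X) + a X^2/2;
   - every cost is at least c x (the best supplier's marginal cost is c), so the optimal
     welfare is at most the best surplus against the cost c, which exceeds the surplus
     at X by at most cb D^2/(2a) with cb = (p(X)/c)^((beta-1)/beta) <= (p(0)/c)^(...);
   - in this quadratic model the welfare ratio is at least min_(T >= 1) of
     (T^2 + 2)/(T^2 + 2T + cb), which is f(cb), attained at T = phi. *)

From Stdlib Require Import Reals Lra Lia List ClassicalEpsilon.
From Coquelicot Require Import Coquelicot.
Open Scope R_scope.

Lemma Rpower_base_1 y : Rpower 1 y = 1.
Proof. unfold Rpower. rewrite ln_1, Rmult_0_r. apply exp_0. Qed.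

Lemma Rpower_pos x y : 0 < Rpower x y.
Proof. apply exp_pos. Qed.

Lemma Rpower_succ x b : 0 < x -> Rpower x (b + 1) = Rpower x b * x.
Proof. intros Hx. rewrite Rpower_plus, Rpower_1; auto. Qed.

Lemma Rpower_pred x b : 0 < x -> Rpower x b = Rpower x (b - 1) * x.
Proof. intros Hx. rewrite <- Rpower_succ by auto. f_equal; ring. Qed.

Lemma Rpower_le_1 t b : 0 <= b -> 0 < t <= 1 -> Rpower t b <= 1.
Proof. intros. rewrite <- (Rpower_base_1 b). apply Rle_Rpower_l; lra. Qed.

Lemma Rpower_ge_1 t b : 0 <= b -> 1 <= t -> 1 <= Rpower t b.
Proof. intros. rewrite <- (Rpower_O t) by lra. apply Rle_Rpower; lra. Qed.

Lemma Rpower_le_self t b : 1 <= b -> 0 < t <= 1 -> Rpower t b <= t.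
Proof.
  intros Hb Ht. rewrite (Rpower_pred t b) by lra.
  pose proof (Rpower_le_1 t (b - 1) ltac:(lra) Ht). nra.
Qed.

Lemma is_derive_Rpower x g :
  0 < x -> is_derive (fun s => Rpower s g) x (g * Rpower x (g - 1)).
Proof. intros Hx. apply is_derive_Reals, derivable_pt_lim_power, Hx. Qed.

Lemma nondecreasing_of_derive (f f' : R -> R) a b : a <= b ->
  (forall s, a <= s <= b -> is_derive f s (f' s)) ->
  (forall s, a < s < b -> 0 <= f' s) -> f a <= f b.
Proof.
  intros Hab Hd Hpos. destruct (Req_dec a b) as [->|Hne]; [lra|].
  destruct (MVT_cor2 f f' a b) as [s [Hs Hsab]]; [lra| |].
  - intros s Hs. apply is_derive_Reals. auto.
  - specialize (Hpos s Hsab). nra.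
Qed.

Lemma Rpower_bernoulli g r : 1 <= g -> 0 < r -> 1 + g * (r - 1) <= Rpower r g.
Proof.
  intros Hg Hr.
  set (h := fun s => Rpower s g - g * s).
  set (h' := fun s => g * Rpower s (g - 1) - g).
  assert (Hd : forall s, 0 < s -> is_derive h s (h' s)).
  { intros s Hs. apply (is_derive_minus (fun s => Rpower s g) (fun s => g * s)).
    - apply is_derive_Rpower; auto.
    - auto_derive; auto; ring. }
  enough (h 1 <= h r) by (unfold h in *; rewrite Rpower_base_1 in *; lra).
  destruct (Rle_lt_dec 1 r) as [H1r|Hr1].
  - apply (nondecreasing_of_derive h h' 1 r H1r).
    + intros s Hs. apply Hd. lra.
    + intros s Hs. unfold h'. pose proof (Rpower_ge_1 s (g - 1) ltac:(lra) ltac:(lra)). nra.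
  - apply Ropp_le_cancel.
    apply (nondecreasing_of_derive (fun s => - h s) (fun s => - h' s) r 1); [lra| |].
    + intros s Hs. apply (is_derive_opp h). apply Hd. lra.
    + intros s Hs. unfold h'. pose proof (Rpower_le_1 s (g - 1) ltac:(lra) ltac:(lra)). nra.
Qed.

Lemma Rpower_tangent g t u : 1 <= g -> 0 < t -> 0 < u ->
  Rpower u g + g * Rpower u (g - 1) * (t - u) <= Rpower t g.
Proof.
  intros Hg Ht Hu.
  pose proof (Rpower_bernoulli g (t / u) Hg ltac:(apply Rdiv_lt_0_compat; auto)) as B.
  replace t with (t / u * u) at 2 by (field; lra).
  rewrite <- Rpower_mult_distr by (try apply Rdiv_lt_0_compat; auto).
  rewrite (Rpower_pred u g) by auto.
  pose proof (Rpower_pos u (g - 1)) as Hp.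
  replace (t - u) with ((t / u - 1) * u) by (field; lra).
  replace (Rpower u (g - 1) * u + g * Rpower u (g - 1) * ((t / u - 1) * u))
    with ((1 + g * (t / u - 1)) * (Rpower u (g - 1) * u)) by ring.
  apply Rmult_le_compat_r; nra.
Qed.

(* Second-order lower bound for [int_u^Q0 s^b ds] (i.e. [s^b] dominates its tangent at [u]). *)
Lemma Rpower_primitive_lower b u Q0 : 1 <= b -> 0 < u <= Q0 ->
  (Q0 - u) * Rpower u b + b * Rpower u (b - 1) * (Q0 - u) ^ 2 / 2 <=
  Rpower Q0 (b + 1) / (b + 1) - Rpower u (b + 1) / (b + 1).
Proof.
  intros Hb Hu.
  set (f := fun s => Rpower s (b + 1) / (b + 1) - (s - u) * Rpower u b
                     - b * Rpower u (b - 1) * (s - u) ^ 2 / 2).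
  enough (f u <= f Q0) by (unfold f in *; replace (u - u) with 0 in * by ring; lra).
  apply (nondecreasing_of_derive f
    (fun s => Rpower s b - Rpower u b - b * Rpower u (b - 1) * (s - u)) u Q0 (proj2 Hu)).
  - intros s Hs. unfold f, Rpower. auto_derive; [lra|].
    fold (Rpower s b) (Rpower s (b + 1)) (Rpower u b) (Rpower u (b - 1)).
    rewrite (Rpower_succ s b) by lra. field. lra.
  - intros s Hs. pose proof (Rpower_tangent b s u Hb ltac:(lra) ltac:(lra)). lra.
Qed.

(* The area under [s^b] on [v,u] above the level [v^b] is at most the triangle
   through the chord, since [s^b] is convex. *)
Lemma Rpower_primitive_chord b v u : 1 <= b -> 0 < v <= u ->
  (Rpower u (b + 1) - Rpower v (b + 1)) / (b + 1) - Rpower v b * (u - v) <=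
  (u - v) * (Rpower u b - Rpower v b) / 2.
Proof.
  intros Hb Hv.
  set (f := fun s => (s - v) * (Rpower s b - Rpower v b) / 2
                     - Rpower s (b + 1) / (b + 1) + Rpower v b * s).
  enough (f v <= f u) by (unfold f in *; unfold Rdiv in *; lra).
  apply (nondecreasing_of_derive f
    (fun s => (Rpower v b - Rpower s b + b * Rpower s (b - 1) * (s - v)) / 2) v u (proj2 Hv)).
  - intros s Hs. unfold f, Rpower. auto_derive; [lra|].
    fold (Rpower s b) (Rpower s (b + 1)) (Rpower v b) (Rpower s (b - 1)).
    rewrite (Rpower_succ s b), (Rpower_pred s b) by lra. field. lra.
  - intros s Hs. pose proof (Rpower_tangent b v s Hb ltac:(lra) ltac:(lra)). lra.
Qed.

(** Two local criteria: a quadratic contact gives a zero derivative, a linear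
    contact gives continuity.  They handle the kink of the demand at [Q]. *)

Lemma is_derive_0_of_quadratic_contact (f : R -> R) x0 K : 0 <= K ->
  (forall h, Rabs h < 1 -> Rabs (f (x0 + h) - f x0) <= K * h ^ 2) -> is_derive f x0 0.
Proof.
  intros HK Hf. apply is_derive_Reals. intros eps Heps.
  assert (Hd : 0 < Rmin 1 (eps / (K + 1))) by (apply Rmin_pos; [lra|apply Rdiv_lt_0_compat; lra]).
  exists (mkposreal _ Hd). intros h Hh0 Hh. simpl in Hh.
  pose proof (Rmin_l 1 (eps / (K + 1))). pose proof (Rmin_r 1 (eps / (K + 1))).
  pose proof (Rabs_pos_lt h Hh0) as Hpos.
  specialize (Hf h ltac:(lra)).
  rewrite Rminus_0_r, Rabs_div by auto.
  rewrite <- pow2_abs in Hf.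
  apply (Rle_lt_trans _ (K * Rabs h)).
  - apply (Rmult_le_reg_r (Rabs h)); auto. unfold Rdiv.
    rewrite Rmult_assoc, Rinv_l by lra. nra.
  - apply (Rle_lt_trans _ (K * (eps / (K + 1)))); [apply Rmult_le_compat_l; lra|].
    apply (Rmult_lt_reg_r (K + 1)); [lra|].
    replace (K * (eps / (K + 1)) * (K + 1)) with (K * eps) by (field; lra). nra.
Qed.

Lemma continuous_of_linear_contact (f : R -> R) x0 K : 0 <= K ->
  (forall h, Rabs h < 1 -> Rabs (f (x0 + h) - f x0) <= K * Rabs h) -> continuous f x0.
Proof.
  intros HK Hf. apply continuity_pt_filterlim, continuity_pt_locally. intros eps.
  pose proof (cond_pos eps) as Heps.
  assert (Hd : 0 < Rmin 1 (eps / (K + 1))) by (apply Rmin_pos; [lra|apply Rdiv_lt_0_compat; lra]).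
  exists (mkposreal _ Hd). intros y Hy. simpl in y.
  change (Rabs (y - x0) < Rmin 1 (eps / (K + 1))) in Hy.
  pose proof (Rmin_l 1 (eps / (K + 1))). pose proof (Rmin_r 1 (eps / (K + 1))).
  specialize (Hf (y - x0) ltac:(lra)). replace (x0 + (y - x0)) with (y : R) in Hf by ring.
  apply (Rle_lt_trans _ _ _ Hf).
  apply (Rle_lt_trans _ (K * (eps / (K + 1)))); [apply Rmult_le_compat_l; lra|].
  apply (Rmult_lt_reg_r (K + 1)); [lra|].
  replace (K * (eps / (K + 1)) * (K + 1)) with (K * eps) by (field; lra). nra.
Qed.

Lemma integral_of_is_RInt f a b v : is_RInt f a b v -> integral f a b = v.
Proof.
  intros H.
  assert (pr : Riemann_integrable f a b) by (apply ex_RInt_Reals_0; exists v; auto).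
  assert (Hex : exists I, exists pr : Riemann_integrable f a b, RiemannInt pr = I)
    by (exists (RiemannInt pr), pr; auto).
  unfold integral. destruct (epsilon_spec (inhabits 0) _ Hex) as [pr' <-].
  rewrite <- RInt_Reals. apply is_RInt_unique, H.
Qed.

Definition pdem_primitive (alpha Q beta q : R) : R :=
  if Rlt_dec q Q then - (alpha / (beta + 1)) * Rpower (Q - q) (beta + 1) else 0.

(* [- p'(X)], the steepness of the demand at the quantity [X]. *)
Definition pdem_slope (alpha Q beta X : R) : R := alpha * beta * Rpower (Q - X) (beta - 1).

Section Demand.
Variables (alpha Q beta : R).
Hypotheses (Halpha : 0 < alpha) (Hbeta : 1 <= beta).

Local Notation p := (pdem alpha Q beta).
Local Notation G := (pdem_primitive alpha Q beta).

Lemma pdem_below q : q < Q -> p q = alpha * Rpower (Q - q) beta.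
Proof. intros Hq. unfold pdem. destruct (Rlt_dec q Q); [auto|lra]. Qed.

Lemma pdem_above q : Q <= q -> p q = 0.
Proof. intros Hq. unfold pdem. destruct (Rlt_dec q Q); [lra|auto]. Qed.

Lemma primitive_below q : q < Q -> G q = - (alpha / (beta + 1)) * Rpower (Q - q) (beta + 1).
Proof. intros Hq. unfold pdem_primitive. destruct (Rlt_dec q Q); [auto|lra]. Qed.

Lemma primitive_above q : Q <= q -> G q = 0.
Proof. intros Hq. unfold pdem_primitive. destruct (Rlt_dec q Q); [lra|auto]. Qed.

Lemma primitive_derive q : is_derive G q (p q).
Proof.
  destruct (Rtotal_order q Q) as [Hq|[->|Hq]].
  - apply (is_derive_ext_loc (fun q => - (alpha / (beta + 1)) * Rpower (Q - q) (beta + 1))).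
    + apply (filter_imp (fun t => t < Q)); [|apply (open_lt Q q Hq)].
      intros t Ht. rewrite primitive_below; auto.
    + rewrite pdem_below by auto. unfold Rpower. auto_derive; [lra|].
      fold (Rpower (Q + - q) (beta + 1)) (Rpower (Q - q) beta).
      replace (Q + - q) with (Q - q) by ring.
      rewrite (Rpower_succ (Q - q) beta) by lra. field. lra.
  - rewrite pdem_above by lra.
    apply (is_derive_0_of_quadratic_contact _ _ (alpha / (beta + 1))).
    { apply Rlt_le, Rdiv_lt_0_compat; lra. }
    intros h Hh. rewrite (primitive_above Q) by lra.
    destruct (Rlt_le_dec h 0) as [Hneg|Hnneg].
    + rewrite primitive_below by lra. replace (Q - (Q + h)) with (- h) by ring.
      rewrite Rabs_left in Hh by lra.
      rewrite Rpower_succ by lra.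
      pose proof (Rpower_le_self (- h) beta Hbeta ltac:(lra)).
      pose proof (Rpower_pos (- h) beta).
      assert (0 < alpha / (beta + 1)) by (apply Rdiv_lt_0_compat; lra).
      set (K := alpha / (beta + 1)) in *. set (P := Rpower (- h) beta) in *.
      replace (- K * (P * - h) - 0) with (- (K * (P * - h))) by ring.
      rewrite Rabs_Ropp, Rabs_right by (apply Rle_ge; apply Rmult_le_pos; nra).
      apply Rmult_le_compat_l; nra.
    + rewrite primitive_above by lra. rewrite Rminus_0_r, Rabs_R0.
      apply Rmult_le_pos; [apply Rlt_le, Rdiv_lt_0_compat; lra|apply pow2_ge_0].
  - rewrite pdem_above by lra.
    apply (is_derive_ext_loc (fun _ => 0)); [|apply (is_derive_const 0)].
    apply (filter_imp (fun t => Q < t)); [|apply (open_gt Q q Hq)].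
    intros t Ht. rewrite primitive_above; auto. lra.
Qed.

Lemma pdem_continuous q : continuous p q.
Proof.
  destruct (Rtotal_order q Q) as [Hq|[->|Hq]].
  - apply (continuous_ext_loc _ (fun q => alpha * Rpower (Q - q) beta)).
    + apply (filter_imp (fun t => t < Q)); [|apply (open_lt Q q Hq)].
      intros t Ht. rewrite pdem_below; auto.
    + apply (ex_derive_continuous (fun q => alpha * Rpower (Q - q) beta)).
      unfold Rpower. auto_derive. lra.
  - apply (continuous_of_linear_contact _ _ alpha); [lra|].
    intros h Hh. rewrite (pdem_above Q), Rminus_0_r by lra.
    destruct (Rlt_le_dec h 0) as [Hneg|Hnneg].
    + rewrite pdem_below by lra. replace (Q - (Q + h)) with (- h) by ring.
      rewrite Rabs_left in Hh by lra. rewrite (Rabs_left h) by lra.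
      pose proof (Rpower_le_self (- h) beta Hbeta ltac:(lra)).
      pose proof (Rpower_pos (- h) beta).
      rewrite Rabs_right by nra. nra.
    + rewrite pdem_above, Rabs_R0 by lra. pose proof (Rabs_pos h). nra.
  - apply (continuous_ext_loc _ (fun _ => 0)); [|apply continuous_const].
    apply (filter_imp (fun t => Q < t)); [|apply (open_gt Q q Hq)].
    intros t Ht. rewrite pdem_above; auto. lra.
Qed.

Lemma integral_pdem Y : integral p 0 Y = G Y - G 0.
Proof.
  apply integral_of_is_RInt, (is_RInt_derive G p).
  - intros; apply primitive_derive.
  - intros; apply pdem_continuous.
Qed.

Hypothesis HQ : 0 < Q.

Lemma integral_pdem_below Y : Y < Q ->
  integral p 0 Y = alpha / (beta + 1) * (Rpower Q (beta + 1) - Rpower (Q - Y) (beta + 1)).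
Proof.
  intros HY. rewrite integral_pdem, !primitive_below, Rminus_0_r by lra. ring.
Qed.

Lemma integral_pdem_above Y : Q <= Y -> integral p 0 Y = alpha / (beta + 1) * Rpower Q (beta + 1).
Proof.
  intros HY. rewrite integral_pdem, primitive_above, primitive_below, Rminus_0_r by lra. ring.
Qed.

Lemma pdem_slope_pos X : X < Q -> 0 < pdem_slope alpha Q beta X.
Proof.
  intros HX. unfold pdem_slope. pose proof (Rpower_pos (Q - X) (beta - 1)).
  repeat apply Rmult_lt_0_compat; lra.
Qed.

Lemma pdem_tangent X q : X < Q -> q < Q -> p X + pdem_slope alpha Q beta X * (X - q) <= p q.
Proof.
  intros HX Hq. rewrite !pdem_below by auto. unfold pdem_slope.
  pose proof (Rpower_tangent beta (Q - q) (Q - X) Hbeta ltac:(lra) ltac:(lra)) as T.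
  replace (Q - q - (Q - X)) with (X - q) in T by ring. nra.
Qed.

(* Consumer surplus at [X] dominates the quadratic obtained from the tangent at [X]. *)
Lemma integral_pdem_lower X : 0 <= X < Q ->
  X * p X + pdem_slope alpha Q beta X * X ^ 2 / 2 <= integral p 0 X.
Proof.
  intros HX. rewrite integral_pdem_below, pdem_below by lra. unfold pdem_slope.
  pose proof (Rpower_primitive_lower beta (Q - X) Q Hbeta ltac:(lra)) as L.
  replace (Q - (Q - X)) with X in L by ring.
  replace (alpha / (beta + 1) * (Rpower Q (beta + 1) - Rpower (Q - X) (beta + 1)))
    with (alpha * (Rpower Q (beta + 1) / (beta + 1) - Rpower (Q - X) (beta + 1) / (beta + 1)))
    by (field; lra).
  nra.
Qed.

End Demand.

(** Bounding the surplus [int_0^Y p - c Y] of any quantity [Y].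
    For [Y = Q - w < Q] this surplus equals [alpha Q^(beta+1)/(beta+1) - c Q - psi w]
    with [psi] below; [psi] is minimal at the level [v] where [alpha v^beta = c]. *)

Definition residual_surplus (alpha beta c w : R) : R :=
  alpha / (beta + 1) * Rpower w (beta + 1) - c * w.

Section ResidualSurplus.
Variables (alpha beta c v : R).
Hypotheses (Halpha : 0 < alpha) (Hbeta : 1 <= beta) (Hc : 0 < c) (Hv : 0 < v)
  (Hvbeta : Rpower v beta = c / alpha).

Local Notation psi := (residual_surplus alpha beta c).

Lemma residual_surplus_min w : 0 < w -> psi v <= psi w.
Proof.
  intros Hw. unfold residual_surplus.
  pose proof (Rpower_tangent (beta + 1) w v ltac:(lra) Hw Hv) as T.
  replace (beta + 1 - 1) with beta in T by ring. rewrite Hvbeta in T.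
  assert (Hk : 0 < alpha / (beta + 1)) by (apply Rdiv_lt_0_compat; lra).
  apply Rmult_le_compat_l with (r := alpha / (beta + 1)) in T; [|lra].
  replace (alpha / (beta + 1) * (Rpower v (beta + 1) + (beta + 1) * (c / alpha) * (w - v)))
    with (alpha / (beta + 1) * Rpower v (beta + 1) + c * (w - v)) in T by (field; lra).
  lra.
Qed.

Lemma residual_surplus_min_nonpos : psi v <= 0.
Proof.
  unfold residual_surplus. rewrite Rpower_succ, Hvbeta by lra.
  replace (alpha / (beta + 1) * (c / alpha * v) - c * v) with (- (c * v * beta / (beta + 1)))
    by (field; lra).
  assert (0 < c * v * beta / (beta + 1)) by (apply Rdiv_lt_0_compat; [repeat apply Rmult_lt_0_compat|]; lra).
  lra.
Qed.

Lemma residual_surplus_gap u : v <= u ->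
  psi u - psi v <= (alpha * Rpower u beta - c) ^ 2 / (2 * (alpha * beta * Rpower v (beta - 1))).
Proof.
  intros Hvu. set (b := alpha * beta * Rpower v (beta - 1)).
  assert (Hb : 0 < b) by (unfold b; pose proof (Rpower_pos v (beta - 1)); apply Rmult_lt_0_compat; nra).
  set (D := alpha * Rpower u beta - c).
  pose proof (Rpower_primitive_chord beta v u Hbeta ltac:(lra)) as Chord.
  pose proof (Rpower_tangent beta u v Hbeta ltac:(lra) Hv) as Tangent.
  rewrite Hvbeta in Chord, Tangent.
  assert (Hchord : psi u - psi v <= (u - v) * D / 2).
  { apply Rmult_le_compat_l with (r := alpha) in Chord; [|lra].
    unfold residual_surplus, D.
    replace (alpha * ((Rpower u (beta + 1) - Rpower v (beta + 1)) / (beta + 1) - c / alpha * (u - v)))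
      with (alpha / (beta + 1) * Rpower u (beta + 1) - c * u
            - (alpha / (beta + 1) * Rpower v (beta + 1) - c * v)) in Chord by (field; lra).
    replace (alpha * ((u - v) * (Rpower u beta - c / alpha) / 2))
      with ((u - v) * (alpha * Rpower u beta - c) / 2) in Chord by (field; lra).
    exact Chord. }
  assert (Hwidth : b * (u - v) <= D).
  { apply Rmult_le_compat_l with (r := alpha) in Tangent; [|lra].
    unfold b, D.
    replace (alpha * (c / alpha + beta * Rpower v (beta - 1) * (u - v)))
      with (c + alpha * beta * Rpower v (beta - 1) * (u - v)) in Tangent by (field; lra).
    lra. }
  fold b. replace (D ^ 2 / (2 * b)) with ((D / b) * D / 2) by (field; lra).
  apply (Rle_trans _ _ _ Hchord).
  assert (u - v <= D / b).
  { apply (Rmult_le_reg_l b); auto. replace (b * (D / b)) with D by (field; lra). lra. }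
  assert (0 <= D) by nra.
  unfold Rdiv. apply Rmult_le_compat_r; [lra|]. apply Rmult_le_compat_r; lra.
Qed.

End ResidualSurplus.

Section SurplusBound.
Variables (alpha Q beta c : R).
Hypotheses (Halpha : 0 < alpha) (HQ : 0 < Q) (Hbeta : 1 <= beta) (Hc : 0 < c).

Local Notation p := (pdem alpha Q beta).

Lemma surplus_below Y : Y < Q ->
  integral p 0 Y - c * Y =
  alpha / (beta + 1) * Rpower Q (beta + 1) - c * Q - residual_surplus alpha beta c (Q - Y).
Proof. intros HY. rewrite integral_pdem_below by auto. unfold residual_surplus. ring. Qed.

Lemma price_ratio_power v X : 0 < v -> Rpower v beta = c / alpha -> X < Q ->
  Rpower (p X / c) ((beta - 1) / beta) = Rpower ((Q - X) / v) (beta - 1).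
Proof.
  intros Hv Hvbeta HX. rewrite pdem_below by auto.
  assert (Hratio : alpha * Rpower (Q - X) beta / c = Rpower ((Q - X) / v) beta).
  { assert (E : Rpower ((Q - X) / v) beta * Rpower v beta = Rpower (Q - X) beta).
    { rewrite Rpower_mult_distr by (try apply Rdiv_lt_0_compat; lra). f_equal. field. lra. }
    rewrite <- E, Hvbeta. field. lra. }
  rewrite Hratio, Rpower_mult. f_equal. field. lra.
Qed.

Lemma surplus_upper X Y : 0 <= X < Q -> c < p X -> 0 <= Y ->
  integral p 0 Y - c * Y <= integral p 0 X - c * X +
    Rpower (p X / c) ((beta - 1) / beta) * (p X - c) ^ 2 / (2 * pdem_slope alpha Q beta X).
Proof.
  intros HX HcX HY.
  set (v := Rpower (c / alpha) (/ beta)).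
  assert (Hv : 0 < v) by apply Rpower_pos.
  assert (Hvbeta : Rpower v beta = c / alpha).
  { unfold v. rewrite Rpower_mult. replace (/ beta * beta) with 1 by (field; lra).
    apply Rpower_1, Rdiv_lt_0_compat; lra. }
  set (u := Q - X). assert (Hu : 0 < u) by (unfold u; lra).
  assert (Hvu : v <= u).
  { destruct (Rle_lt_dec v u) as [|Hlt]; auto.
    assert (Rpower u beta <= Rpower v beta) by (apply Rle_Rpower_l; lra).
    rewrite pdem_below in HcX by lra. rewrite Hvbeta in H.
    apply Rmult_le_compat_l with (r := alpha) in H; [|lra].
    replace (alpha * (c / alpha)) with c in H by (field; lra). fold u in HcX. lra. }
  assert (Hslope : pdem_slope alpha Q beta X
                   = alpha * beta * Rpower v (beta - 1) * Rpower (u / v) (beta - 1)).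
  { unfold pdem_slope. fold u.
    rewrite (Rmult_assoc (alpha * beta)), Rpower_mult_distr by (try apply Rdiv_lt_0_compat; lra).
    f_equal. f_equal. field. lra. }
  rewrite (price_ratio_power v) by (auto; lra). fold u. rewrite Hslope.
  pose proof (Rpower_pos (u / v) (beta - 1)).
  pose proof (Rpower_pos v (beta - 1)).
  replace (Rpower (u / v) (beta - 1) * (p X - c) ^ 2
           / (2 * (alpha * beta * Rpower v (beta - 1) * Rpower (u / v) (beta - 1))))
    with ((p X - c) ^ 2 / (2 * (alpha * beta * Rpower v (beta - 1)))) by (field; nra).
  rewrite pdem_below by lra. fold u.
  pose proof (residual_surplus_gap alpha beta c v Halpha Hbeta Hv Hvbeta u Hvu) as Gap.
  rewrite (surplus_below X) by lra. fold u.
  destruct (Rlt_le_dec Y Q) as [HYQ|HYQ].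
  - rewrite surplus_below by auto.
    pose proof (residual_surplus_min alpha beta c v Halpha Hbeta Hv Hvbeta (Q - Y) ltac:(lra)).
    lra.
  - rewrite integral_pdem_above by auto.
    pose proof (residual_surplus_min_nonpos alpha beta c v Halpha Hbeta Hc Hv Hvbeta).
    assert (c * Q <= c * Y) by (apply Rmult_le_compat_l; lra). lra.
Qed.

End SurplusBound.

Lemma total_S N f : total (S N) f = total N f + f N.
Proof.
  unfold total. rewrite seq_S, map_app, fold_right_app. simpl.
  induction (map f (seq 0 N)) as [|a l IH]; simpl; [ring|rewrite IH; ring].
Qed.

Lemma total_le N f g : (forall n, (n < N)%nat -> f n <= g n) -> total N f <= total N g.
Proof.
  induction N as [|N IH]; intros H; [apply Rle_refl|].
  rewrite !total_S. assert (f N <= g N) by (apply H; lia).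
  assert (total N f <= total N g) by (apply IH; intros; apply H; lia). lra.
Qed.

Lemma total_ext N f g : (forall n, (n < N)%nat -> f n = g n) -> total N f = total N g.
Proof. intros H. apply Rle_antisym; apply total_le; intros n Hn; rewrite H; auto; lra. Qed.

Lemma total_plus N f g : total N (fun n => f n + g n) = total N f + total N g.
Proof. induction N as [|N IH]; [unfold total; simpl; ring|]. rewrite !total_S, IH. ring. Qed.

Lemma total_scal N c f : total N (fun n => c * f n) = c * total N f.
Proof. induction N as [|N IH]; [unfold total; simpl; ring|]. rewrite !total_S, IH. ring. Qed.

Lemma total_nonneg N f : (forall n, (n < N)%nat -> 0 <= f n) -> 0 <= total N f.
Proof.
  induction N as [|N IH]; intros H; [apply Rle_refl|].
  rewrite total_S. assert (0 <= f N) by (apply H; lia).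
  assert (0 <= total N f) by (apply IH; intros; apply H; lia). lra.
Qed.

Lemma total_indicator N k v : (k < N)%nat -> total N (fun n => if Nat.eqb n k then v else 0) = v.
Proof.
  induction N as [|N IH]; intros Hk; [lia|]. rewrite total_S.
  destruct (Nat.eq_dec k N) as [->|Hne].
  - rewrite Nat.eqb_refl, (total_ext N _ (fun _ => 0 * 0)), total_scal; [ring|].
    intros n Hn. destruct (Nat.eqb_spec n N); [lia|ring].
  - rewrite IH by lia. destruct (Nat.eqb_spec N k); [lia|ring].
Qed.

Lemma total_term_le N f k : (k < N)%nat -> (forall n, (n < N)%nat -> 0 <= f n) -> f k <= total N f.
Proof.
  intros Hk H. rewrite <- (total_indicator N k (f k) Hk). apply total_le.
  intros n Hn. destruct (Nat.eqb_spec n k); [subst; lra|auto].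
Qed.

Lemma total_upd N x n y : (n < N)%nat -> total N (upd x n y) = total N x - x n + y.
Proof.
  intros Hn.
  rewrite (total_ext N _ (fun m => x m + (if Nat.eqb m n then y - x n else 0))).
  - rewrite total_plus, total_indicator by auto. ring.
  - intros m Hm. unfold upd. destruct (Nat.eqb_spec m n); [subst; ring|ring].
Qed.

Lemma upd_same x n y : upd x n y n = y.
Proof. unfold upd. rewrite Nat.eqb_refl. auto. Qed.

Definition convex_nonneg (f : R -> R) : Prop :=
  forall x y t, 0 <= x -> 0 <= y -> 0 <= t <= 1 ->
    f (t * x + (1 - t) * y) <= t * f x + (1 - t) * f y.

Lemma le_of_le_add_small A B K r : 0 < r -> 0 <= K ->
  (forall d, 0 < d < r -> A <= B + K * d) -> A <= B.
Proof.
  intros Hr HK H. destruct (Rle_lt_dec A B) as [|Hlt]; auto.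
  set (d := Rmin (r / 2) ((A - B) / (2 * (K + 1)))).
  assert (Hd1 : d <= r / 2) by apply Rmin_l.
  assert (Hd2 : d <= (A - B) / (2 * (K + 1))) by apply Rmin_r.
  assert (Hd0 : 0 < d) by (apply Rmin_pos; [lra|apply Rdiv_lt_0_compat; lra]).
  specialize (H d ltac:(lra)).
  assert (K * d <= (A - B) / 2).
  { apply (Rle_trans _ (K * ((A - B) / (2 * (K + 1))))); [apply Rmult_le_compat_l; lra|].
    apply (Rmult_le_reg_r (2 * (K + 1))); [lra|].
    replace (K * ((A - B) / (2 * (K + 1))) * (2 * (K + 1))) with (K * (A - B)) by (field; lra).
    nra. }
  lra.
Qed.

Lemma convex_support f z d y : convex_nonneg f -> 0 < z -> 0 <= y ->
  derivable_pt_lim f z d -> f z + d * (y - z) <= f y.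
Proof.
  intros Hc Hz Hy Hd.
  destruct (Rle_lt_dec (f z + d * (y - z)) (f y)) as [|Hlt]; auto. exfalso.
  destruct (Req_dec y z) as [->|Hyz]; [lra|].
  set (e := f z + d * (y - z) - f y).
  set (m := Rabs (y - z)).
  assert (Hm : 0 < m) by (apply Rabs_pos_lt; lra).
  destruct (Hd (e / m) ltac:(apply Rdiv_lt_0_compat; unfold e; lra)) as [del Hdel].
  pose proof (cond_pos del) as Hdp.
  (* move from [z] towards [y] by a step [h] small enough for the difference quotient *)
  set (t := Rmin 1 (del / (2 * m))).
  assert (Ht1 : t <= 1) by apply Rmin_l.
  assert (Ht2 : t <= del / (2 * m)) by apply Rmin_r.
  assert (Ht0 : 0 < t) by (apply Rmin_pos; [lra|apply Rdiv_lt_0_compat; lra]).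
  set (h := t * (y - z)).
  assert (Hh0 : h <> 0) by (unfold h; intro H; apply Rmult_integral in H; lra).
  assert (Hhd : Rabs h < del).
  { unfold h. rewrite Rabs_mult, (Rabs_right t) by lra. fold m.
    apply (Rle_lt_trans _ (del / (2 * m) * m)); [apply Rmult_le_compat_r; lra|].
    replace (del / (2 * m) * m) with (del / 2) by (field; lra). lra. }
  specialize (Hdel h Hh0 Hhd).
  specialize (Hc y z t Hy ltac:(lra) ltac:(lra)).
  replace (t * y + (1 - t) * z) with (z + h) in Hc by (unfold h; ring).
  set (qd := (f (z + h) - f z) / h) in *.
  assert (Hq : f (z + h) - f z = qd * h) by (unfold qd; field; auto).
  assert (Hchord : qd * (y - z) <= f y - f z).
  { apply (Rmult_le_reg_l t); [lra|]. replace (t * (qd * (y - z))) with (qd * h) by (unfold h; ring). lra. }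
  assert (Hclose : Rabs ((qd - d) * (y - z)) < e).
  { rewrite Rabs_mult. fold m. apply (Rlt_le_trans _ (e / m * m)).
    - apply Rmult_lt_compat_r; auto.
    - right; field; lra. }
  apply Rabs_def2 in Hclose. unfold e in Hclose. lra.
Qed.

Lemma linear_derivative f c z d : convex_nonneg f -> (forall x, 0 <= x -> f x = c * x) ->
  0 < z -> derivable_pt_lim f z d -> d = c.
Proof.
  intros Hc Hf Hz Hd.
  pose proof (convex_support f z d 0 Hc Hz ltac:(lra) Hd) as H1.
  pose proof (convex_support f z d (2 * z) Hc Hz ltac:(lra) Hd) as H2.
  rewrite !Hf in H1, H2 by lra. nra.
Qed.

Lemma cost_lower_bound (Cn dCn : R -> R) c : convex_nonneg Cn -> Cn 0 = 0 ->
  (forall x y, 0 <= x <= y -> Cn x <= Cn y) ->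
  (forall z, 0 < z -> derivable_pt_lim Cn z (dCn z)) -> (forall z, 0 < z -> c <= dCn z) ->
  0 <= c -> forall y, 0 <= y -> c * y <= Cn y.
Proof.
  intros Hc H0 Hm Hd Hdc Hc0 y Hy.
  destruct (Req_dec y 0) as [->|Hy0]; [rewrite H0; lra|].
  apply (le_of_le_add_small _ _ c y); [lra|lra|].
  intros z Hz. pose proof (convex_support Cn z (dCn z) y Hc ltac:(lra) Hy (Hd z ltac:(lra))).
  pose proof (Hm 0 z ltac:(lra)). pose proof (Hdc z ltac:(lra)). nra.
Qed.

Lemma cost_upper_of_no_reduction (Cn : R -> R) xn P a : convex_nonneg Cn -> Cn 0 = 0 ->
  0 < xn -> 0 <= a ->
  (forall y, 0 <= y < xn -> y * (P + a * (xn - y)) - Cn y <= xn * P - Cn xn) ->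
  Cn xn <= xn * (P - a * xn).
Proof.
  intros Hc H0 Hx Ha H.
  apply (le_of_le_add_small _ _ (xn * a) xn); [lra|nra|].
  intros d Hd. set (y := xn - d).
  specialize (H y ltac:(unfold y; lra)).
  (* convexity between 0 and xn gives Cn y <= (y/xn) Cn xn *)
  set (t := y / xn).
  assert (Ht : 0 <= t <= 1).
  { unfold t, y. split; [apply Rdiv_le_0_compat; lra|].
    apply (Rmult_le_reg_r xn); auto. unfold Rdiv. rewrite Rmult_assoc, Rinv_l by lra. lra. }
  specialize (Hc xn 0 t ltac:(lra) ltac:(lra) Ht).
  replace (t * xn + (1 - t) * 0) with y in Hc by (unfold t; field; lra).
  rewrite H0 in Hc.
  assert (H1 : (1 - t) * Cn xn <= d * (P - a * y)).
  { replace (xn - y) with d in H by (unfold y; ring). unfold y in *. nra. }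
  replace (1 - t) with (d / xn) in H1 by (unfold t, y; field; lra).
  assert (H2 : Cn xn <= xn * (P - a * y)).
  { apply (Rmult_le_reg_l (d / xn)); [apply Rdiv_lt_0_compat; lra|].
    replace (d / xn * (xn * (P - a * y))) with (d * (P - a * y)) by (field; lra). lra. }
  unfold y in H2. nra.
Qed.

Lemma margin_of_no_increase xk P a c r : 0 < r -> 0 <= a ->
  (forall d, 0 < d < r -> (xk + d) * (P - a * d) - c * (xk + d) <= xk * P - c * xk) ->
  P - c <= a * xk.
Proof.
  intros Hr Ha H. apply (le_of_le_add_small _ _ a r); auto.
  intros d Hd. specialize (H d Hd). apply (Rmult_le_reg_l d); [lra|]. nra.
Qed.

(** The efficiency function [f]: [fbound cb] is the minimum over [T >= 1] of
    [(T^2 + 2) / (T^2 + 2 T + cb)], attained at [T = phi_of cb]. *)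

Lemma phi_of_ge_1 cb : 1 <= phi_of cb.
Proof. apply Rmax_r. Qed.

Lemma fbound_min cb T : 0 < cb -> 1 <= T -> fbound cb <= (T ^ 2 + 2) / (T ^ 2 + 2 * T + cb).
Proof.
  intros Hcb HT. pose proof (phi_of_ge_1 cb) as Hphi.
  unfold fbound. set (ph := phi_of cb) in *.
  assert (Hden : 0 < ph ^ 2 + 2 * ph + cb) by nra.
  assert (HdenT : 0 < T ^ 2 + 2 * T + cb) by nra.
  assert (Key : (ph ^ 2 + 2) * (T ^ 2 + 2 * T + cb) <= (T ^ 2 + 2) * (ph ^ 2 + 2 * ph + cb)).
  { pose proof (sqrt_pos (cb ^ 2 - 4 * cb + 12)) as Hs0.
    assert (Hs2 : sqrt (cb ^ 2 - 4 * cb + 12) ^ 2 = cb ^ 2 - 4 * cb + 12)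
      by (rewrite <- Rsqr_pow2; apply Rsqr_sqrt; nra).
    set (s := sqrt (cb ^ 2 - 4 * cb + 12)) in *.
    unfold ph, phi_of, Rmax. fold s.
    destruct (Rle_dec ((2 - cb + s) / 2) 1) as [Hr|Hr].
    - (* the critical point is below 1 exactly when cb >= 3; the minimum is at T = 1 *)
      assert (cb >= 3) by nra.
      assert (0 <= (T - 1) * (cb * T + cb - 6)) by (apply Rmult_le_pos; nra).
      nra.
    - (* [r = (2 - cb + s)/2] is the positive root of [r^2 + (cb-2) r - 2] *)
      set (r := (2 - cb + s) / 2) in *.
      assert (Hroot : r ^ 2 + (cb - 2) * r - 2 = 0).
      { replace (r ^ 2 + (cb - 2) * r - 2) with ((s ^ 2 - (2 - cb) ^ 2 - 8) / 4)
          by (unfold r; field).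
        rewrite Hs2. field. }
      assert (E : (T ^ 2 + 2) * (r ^ 2 + 2 * r + cb) - (r ^ 2 + 2) * (T ^ 2 + 2 * T + cb)
                  = (2 * r + cb - 2) * (T - r) ^ 2 + 2 * (r ^ 2 + (cb - 2) * r - 2) * (T - r))
        by ring.
      rewrite Hroot in E.
      assert (0 <= (2 * r + cb - 2) * (T - r) ^ 2) by (apply Rmult_le_pos; [lra|apply pow2_ge_0]).
      lra. }
  apply (Rmult_le_reg_r (ph ^ 2 + 2 * ph + cb)); auto.
  apply (Rmult_le_reg_r (T ^ 2 + 2 * T + cb)); auto.
  replace ((ph ^ 2 + 2) / (ph ^ 2 + 2 * ph + cb) * (ph ^ 2 + 2 * ph + cb) * (T ^ 2 + 2 * T + cb))
    with ((ph ^ 2 + 2) * (T ^ 2 + 2 * T + cb)) by (field; lra).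
  replace ((T ^ 2 + 2) / (T ^ 2 + 2 * T + cb) * (ph ^ 2 + 2 * ph + cb) * (T ^ 2 + 2 * T + cb))
    with ((T ^ 2 + 2) * (ph ^ 2 + 2 * ph + cb)) by (field; lra).
  lra.
Qed.

Lemma fbound_le_1 cb : 0 < cb -> 0 <= fbound cb <= 1.
Proof.
  intros Hcb. pose proof (phi_of_ge_1 cb) as Hphi. unfold fbound.
  set (ph := phi_of cb) in *.
  split; [apply Rlt_le, Rdiv_lt_0_compat; nra|].
  apply (Rmult_le_reg_r (ph ^ 2 + 2 * ph + cb)); [nra|].
  unfold Rdiv. rewrite Rmult_assoc, Rinv_l by nra. lra.
Qed.

(* The quadratic model: with margin [D > 0], curvature [a > 0], total [X] and a
   quantity [xk <= X] with [D <= a xk], the ratio of the "equilibrium part"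
   [a X^2/2 + a xk^2] to the "optimal part" [D X + a X^2/2 + cb D^2/(2a)] is at least
   [fbound cb]; here [T = a X / D >= 1]. *)
Lemma quadratic_ratio_bound a D X xk cb : 0 < a -> 0 < D -> D <= a * xk -> xk <= X -> 0 < cb ->
  fbound cb * (D * X + a * X ^ 2 / 2 + cb * D ^ 2 / (2 * a)) <= a * X ^ 2 / 2 + a * xk ^ 2.
Proof.
  intros Ha HD Hk HX Hcb.
  set (T := a * X / D).
  assert (HT : 1 <= T).
  { unfold T. apply (Rmult_le_reg_r D); auto. unfold Rdiv. rewrite Rmult_assoc, Rinv_l by lra. nra. }
  assert (HX' : X = T * D / a) by (unfold T; field; lra).
  assert (Hxk : D ^ 2 / a <= a * xk ^ 2).
  { apply (Rmult_le_reg_r a); auto. replace (D ^ 2 / a * a) with (D ^ 2) by (field; lra). nra. }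
  assert (Hscale : 0 < D ^ 2 / (2 * a)) by (apply Rdiv_lt_0_compat; nra).
  pose proof (fbound_min cb T Hcb HT) as Hmin.
  assert (HdenT : 0 < T ^ 2 + 2 * T + cb) by nra.
  replace (D * X + a * X ^ 2 / 2 + cb * D ^ 2 / (2 * a))
    with (D ^ 2 / (2 * a) * (T ^ 2 + 2 * T + cb)) by (rewrite HX'; field; lra).
  apply (Rle_trans _ (a * X ^ 2 / 2 + D ^ 2 / a)); [|lra].
  replace (a * X ^ 2 / 2 + D ^ 2 / a) with (D ^ 2 / (2 * a) * (T ^ 2 + 2)) by (rewrite HX'; field; lra).
  apply Rmult_le_compat_r with (r := D ^ 2 / (2 * a) * (T ^ 2 + 2 * T + cb)) in Hmin; [|nra].
  replace ((T ^ 2 + 2) / (T ^ 2 + 2 * T + cb) * (D ^ 2 / (2 * a) * (T ^ 2 + 2 * T + cb)))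
    with (D ^ 2 / (2 * a) * (T ^ 2 + 2)) in Hmin by (field; lra).
  lra.
Qed.

(* The welfare [W = J - S] of the equilibrium
   has consumer part [J >= D X + a X^2/2] and cost part [S <= D X - a xk^2]; the optimal
   welfare satisfies [W <= WS <= J + K] with [K <= cb D^2/(2a)]. *)
Lemma efficiency_from_quadratic_model W WS J S K a D X xk cb :
  0 < a -> 0 < D -> D <= a * xk -> xk <= X -> 0 < cb ->
  W = J - S -> D * X + a * X ^ 2 / 2 <= J -> S <= D * X - a * xk ^ 2 ->
  WS <= J + K -> K <= cb * D ^ 2 / (2 * a) -> W <= WS ->
  W / WS >= fbound cb.
Proof.
  intros Ha HD Hk HX Hcb HW HJ HS HWS HK HWW.
  pose proof (quadratic_ratio_bound a D X xk cb Ha HD Hk HX Hcb) as Hquad.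
  pose proof (fbound_le_1 cb Hcb) as Hfb.
  assert (Hxk : 0 < xk) by (destruct (Rle_lt_dec xk 0); [nra|auto]).
  assert (0 < a * xk ^ 2) by (apply Rmult_lt_0_compat; [lra|apply pow_lt; lra]).
  assert (0 <= a * X ^ 2) by (apply Rmult_le_pos; [lra|apply pow2_ge_0]).
  assert (HWSpos : 0 < WS) by lra.
  assert (Hmain : fbound cb * WS <= W).
  { apply (Rle_trans _ (fbound cb * (J + cb * D ^ 2 / (2 * a)))); [apply Rmult_le_compat_l; lra|].
    set (J0 := D * X + a * X ^ 2 / 2) in *. set (K0 := cb * D ^ 2 / (2 * a)) in *.
    set (fb := fbound cb) in *.
    (* the bound is linear in J with slope 1 - fb >= 0, so it suffices at J = J0 *)
    assert (E : J - S - fb * (J + K0) = (1 - fb) * (J - J0) + (J0 - S - fb * (J0 + K0))) by ring.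
    assert (0 <= (1 - fb) * (J - J0)) by (apply Rmult_le_pos; lra).
    unfold J0 in *. lra. }
  apply Rle_ge, (Rmult_le_reg_r WS); auto.
  unfold Rdiv. rewrite Rmult_assoc, Rinv_l by lra. lra.
Qed.

Section CournotEquilibrium.
Variables (alpha Q beta c : R) (N k : nat) (C : nat -> R -> R) (x : nat -> R).
Hypotheses (Halpha : 0 < alpha) (HQ : 0 < Q) (Hbeta : 1 <= beta)
  (Hc : 0 < c < alpha * Rpower Q beta) (Hk : (k < N)%nat).
Hypothesis Hconv : forall n, (n < N)%nat -> convex_nonneg (C n).
Hypothesis HC0 : forall n, (n < N)%nat -> C n 0 = 0.
Hypothesis Hcost : forall n, (n < N)%nat -> forall y, 0 <= y -> c * y <= C n y.
Hypothesis HCk : forall y, 0 <= y -> C k y = c * y.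
Hypothesis Heq : cournot_eq (pdem alpha Q beta) C N x.

Local Notation p := (pdem alpha Q beta).
Local Notation X := (total N x).
Local Notation a := (pdem_slope alpha Q beta (total N x)).

Lemma equilibrium_nonneg n : (n < N)%nat -> 0 <= x n.
Proof. apply (proj1 Heq). Qed.

Lemma equilibrium_total_nonneg : 0 <= X.
Proof. apply total_nonneg, equilibrium_nonneg. Qed.

Lemma no_profitable_deviation n y : (n < N)%nat -> 0 <= y ->
  y * p (X - x n + y) - C n y <= x n * p X - C n (x n).
Proof.
  intros Hn Hy. pose proof (proj2 Heq n Hn y Hy) as H. unfold payoff in H.
  rewrite upd_same, total_upd in H by auto. exact H.
Qed.

(* A supplier with positive quantity and zero price would rather produce nothing. *)
Lemma equilibrium_total_lt_Q : X < Q.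
Proof.
  destruct (Rlt_le_dec X Q) as [|HQX]; auto. exfalso.
  assert (Hzero : forall n, (n < N)%nat -> x n <= 0 * x n).
  { intros n Hn. pose proof (no_profitable_deviation n 0 Hn ltac:(lra)) as H.
    rewrite (pdem_above alpha Q beta X), HC0 in H by auto.
    pose proof (Hcost n Hn (x n) (equilibrium_nonneg n Hn)). nra. }
  pose proof (total_le N x (fun n => 0 * x n) Hzero) as H.
  rewrite total_scal in H. lra.
Qed.

Lemma equilibrium_cost_upper n : (n < N)%nat -> C n (x n) <= x n * (p X - a * x n).
Proof.
  intros Hn. pose proof (equilibrium_nonneg n Hn) as Hxn.
  pose proof equilibrium_total_lt_Q as HXQ.
  destruct (Req_dec (x n) 0) as [Hz|Hz]; [rewrite Hz, HC0 by auto; lra|].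
  apply cost_upper_of_no_reduction; auto; [lra|apply Rlt_le, pdem_slope_pos; auto|].
  intros y Hy. pose proof (no_profitable_deviation n y Hn (proj1 Hy)) as Hdev.
  pose proof (pdem_tangent alpha Q beta Halpha Hbeta X (X - x n + y) HXQ ltac:(lra)) as T.
  replace (X - (X - x n + y)) with (x n - y) in T by ring.
  assert (y * (p X + a * (x n - y)) <= y * p (X - x n + y)) by (apply Rmult_le_compat_l; lra).
  lra.
Qed.

Lemma equilibrium_margin : p X - c <= a * x k.
Proof.
  pose proof equilibrium_total_lt_Q as HXQ.
  apply (margin_of_no_increase (x k) (p X) a c (Q - X)); [lra|apply Rlt_le, pdem_slope_pos; auto|].
  intros d Hd. pose proof (equilibrium_nonneg k Hk) as Hxk.
  pose proof (no_profitable_deviation k (x k + d) Hk ltac:(lra)) as Hdev.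
  rewrite !HCk in Hdev by lra.
  pose proof (pdem_tangent alpha Q beta Halpha Hbeta X (X - x k + (x k + d)) HXQ ltac:(lra)) as T.
  replace (X - (X - x k + (x k + d))) with (- d) in T by ring.
  assert ((x k + d) * (p X - a * d) <= (x k + d) * p (X - x k + (x k + d)))
    by (apply Rmult_le_compat_l; lra).
  lra.
Qed.

Lemma equilibrium_price_above_cost : c < p X.
Proof.
  pose proof equilibrium_total_lt_Q as HXQ.
  pose proof (pdem_slope_pos alpha Q beta Halpha Hbeta X HXQ) as Ha.
  destruct (Rlt_le_dec c (p X)) as [|Hpc]; auto. exfalso.
  (* otherwise [a x_n^2 <= x_n (p X - c) <= 0] forces every quantity to vanish *)
  assert (Hzero : forall n, (n < N)%nat -> x n <= 0 * x n).
  { intros n Hn. pose proof (equilibrium_cost_upper n Hn).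
    pose proof (Hcost n Hn (x n) (equilibrium_nonneg n Hn)).
    pose proof (equilibrium_nonneg n Hn).
    assert (x n * (p X - c) <= 0) by (apply Rmult_le_0_l; lra).
    assert (a * (x n * x n) <= 0) by nra.
    assert (x n * x n <= 0) by (apply (Rmult_le_reg_l a); lra).
    nra. }
  pose proof (total_le N x (fun n => 0 * x n) Hzero) as H.
  rewrite total_scal in H. pose proof equilibrium_total_nonneg.
  assert (HX0 : X = 0) by lra.
  rewrite HX0, pdem_below, Rminus_0_r in Hpc by lra. lra.
Qed.

(* Summing the cost bounds, using the sharper margin bound for supplier [k]. *)
Lemma equilibrium_total_cost : total N (fun n => C n (x n)) <= p X * X - a * x k ^ 2.
Proof.
  pose proof (pdem_slope_pos alpha Q beta Halpha Hbeta X equilibrium_total_lt_Q) as Ha.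
  apply (Rle_trans _ (total N (fun n => p X * x n + (if Nat.eqb n k then - a * x k ^ 2 else 0)))).
  - apply total_le. intros n Hn.
    pose proof (equilibrium_cost_upper n Hn). pose proof (equilibrium_nonneg n Hn).
    destruct (Nat.eqb_spec n k) as [->|]; nra.
  - rewrite total_plus, total_scal, total_indicator by auto. lra.
Qed.

Lemma welfare_le_surplus y : nonneg_profile N y ->
  welfare p C N y <= integral p 0 (total N y) - c * total N y.
Proof.
  intros Hy. unfold welfare.
  change (fold_right Rplus 0 (map (fun n => C n (y n)) (seq 0 N))) with (total N (fun n => C n (y n))).
  rewrite <- total_scal.
  enough (total N (fun n => c * y n) <= total N (fun n => C n (y n))) by lra.
  apply total_le. intros n Hn. apply Hcost; auto.
Qed.

Lemma equilibrium_price_ratio_le :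
  Rpower (p X / c) ((beta - 1) / beta) <= Rpower (p 0 / c) ((beta - 1) / beta).
Proof.
  pose proof equilibrium_price_above_cost. pose proof equilibrium_total_lt_Q.
  pose proof equilibrium_total_nonneg.
  apply Rle_Rpower_l; [apply Rdiv_le_0_compat; lra|]. split; [apply Rdiv_lt_0_compat; lra|].
  unfold Rdiv. apply Rmult_le_compat_r; [apply Rlt_le, Rinv_0_lt_compat; lra|].
  rewrite !pdem_below by lra. apply Rmult_le_compat_l; [lra|]. apply Rle_Rpower_l; lra.
Qed.

Lemma equilibrium_efficiency xS cb : social_optimum p C N xS ->
  Rpower (p X / c) ((beta - 1) / beta) <= cb ->
  welfare p C N x / welfare p C N xS >= fbound cb.
Proof.
  intros [HSnn HSopt] Hcb.
  pose proof equilibrium_total_lt_Q as HXQ. pose proof equilibrium_total_nonneg as HX0.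
  pose proof equilibrium_price_above_cost as HcX.
  pose proof (pdem_slope_pos alpha Q beta Halpha Hbeta X HXQ) as Ha.
  pose proof (Rpower_pos (p X / c) ((beta - 1) / beta)) as Hratio.
  pose proof (surplus_upper alpha Q beta c Halpha HQ Hbeta (proj1 Hc) X (total N xS)
                ltac:(lra) HcX (total_nonneg N xS HSnn)) as Hsurplus.
  pose proof (welfare_le_surplus xS HSnn) as HWS.
  apply (efficiency_from_quadratic_model _ _ (integral p 0 X - c * X)
           (total N (fun n => C n (x n)) - c * X)
           (Rpower (p X / c) ((beta - 1) / beta) * (p X - c) ^ 2 / (2 * a))
           a (p X - c) X (x k) cb).
  - exact Ha.
  - lra.
  - apply equilibrium_margin.
  - apply total_term_le; auto. apply equilibrium_nonneg.
  - lra.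
  - unfold welfare. change (fold_right Rplus 0 (map (fun n => C n (x n)) (seq 0 N)))
      with (total N (fun n => C n (x n))). ring.
  - pose proof (integral_pdem_lower alpha Q beta Halpha Hbeta HQ X ltac:(lra)). lra.
  - pose proof equilibrium_total_cost. lra.
  - lra.
  - unfold Rdiv. rewrite !(Rmult_assoc _ ((p X - c) ^ 2)).
    apply Rmult_le_compat_r; [|lra].
    apply Rmult_le_pos; [apply pow2_ge_0|apply Rlt_le, Rinv_0_lt_compat; lra].
  - apply HSopt, (proj1 Heq).
Qed.

End CournotEquilibrium.

Theorem mainTheorem16
  (Q alpha beta : R) (HQ : 0 < Q) (Halpha : 0 < alpha) (Hbeta : 1 <= beta)
  (N : nat) (C dC : nat -> R -> R)
  (HA1 : forall n, (n < N)%nat -> assumption1 (C n) (dC n))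
  (HA3 : exists R0, 0 < R0 /\
           forall n, (n < N)%nat -> pdem alpha Q beta R0 <= dC n 0)
  (HA4 : exists n, (n < N)%nat /\ pdem alpha Q beta 0 > dC n 0)
  (k : nat) (Hk : (k < N)%nat) (c : R)
  (HCk : forall x, 0 <= x -> C k x = c * x)
  (Hc : 0 < c < alpha * Rpower Q beta)
  (Hbest : forall m, (m < N)%nat -> forall x, 0 < x -> dC k x <= dC m x)
  (x xS : nat -> R)
  (Heq : cournot_eq (pdem alpha Q beta) C N x)
  (HS : social_optimum (pdem alpha Q beta) C N xS) :
  let gamma := welfare (pdem alpha Q beta) C N x / welfare (pdem alpha Q beta) C N xS in
  gamma >= fbound (Rpower (pdem alpha Q beta 0 / c) ((beta - 1) / beta)) /\
  gamma >= fbound (Rpower (pdem alpha Q beta (total N x) / c) ((beta - 1) / beta)).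
Proof.
  intros gamma.
  assert (Hconv : forall n, (n < N)%nat -> convex_nonneg (C n))
    by (intros n Hn; exact (proj1 (HA1 n Hn))).
  assert (HC0 : forall n, (n < N)%nat -> C n 0 = 0)
    by (intros n Hn; destruct (HA1 n Hn) as (_ & _ & _ & _ & _ & _ & H0); exact H0).
  (* the linear supplier has marginal cost exactly [c], so all costs are at least [c y] *)
  assert (HdCk : forall z, 0 < z -> dC k z = c).
  { intros z Hz. destruct (HA1 k Hk) as (Hcv & _ & _ & Hder & _).
    apply (linear_derivative (C k) c z); auto. }
  assert (Hcost : forall n, (n < N)%nat -> forall y, 0 <= y -> c * y <= C n y).
  { intros n Hn. destruct (HA1 n Hn) as (Hcv & _ & Hmono & Hder & _ & _ & H0).
    apply (cost_lower_bound (C n) (dC n)); auto; [|lra].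
    intros z Hz. rewrite <- (HdCk z Hz). auto. }
  split; apply (equilibrium_efficiency alpha Q beta c N k C x); auto.
  - apply (equilibrium_price_ratio_le alpha Q beta c N C x); auto.
  - apply Rle_refl.
Qed.
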